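(* Let $\mathcal H$ be a Hopf algebra over a commutative ring $k$ with bijective antipode $S$, and let $C$ be a left $\mathcal H$-module coalgebra. Then the map on the $k$-module $C\otimes \mathcal H$ $$\Delta(a\otimes g)=\big(a^{(0)}\otimes g^{(1)}\big)\otimes\big(S^{-1}(g^{(0)}S(g^{(2)}))\cdot a^{(1)}\otimes g^{(3)}\big)$$ is a coassociative comultiplication with counit $\epsilon_C\otimes\epsilon_{\mathcal H}$. The resulting coalgebra is denoted $C>\!\!\blacktriangleleft\mathcal H$.
   Context: Sweedler notation: for a coalgebra element $c$, $\Delta c=c^{(0)}\otimes c^{(1)}$, $\Delta^n c=c^{(0)}\otimes\cdots\otimes c^{(n)}$ (summation understood); same notation in $\mathcal H$. A left $\mathcal H$-module coalgebra is a coalgebra $(C,\Delta,\epsilon_C)$ which is a left $\mathcal H$-module, $h\otimes c\mapsto h\cdot c$, such that $\Delta(h\cdot c)=h^{(0)}\cdot c^{(0)}\otimes h^{(1)}\cdot c^{(1)}$ and $\epsilon_C(h\cdot c)=\epsilon(h)\epsilon_C(c)$. *)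

From mathcomp Require Import all_boot all_algebra.
Set Implicit Arguments. Unset Strict Implicit. Unset Printing Implicit Defensive.
Import GRing.Theory.
Local Open Scope ring_scope.

(* An element of M1 (x) ... (x) Mn is represented by a finite formal sum of
   pure tensors, i.e. a  seq (M1 * ... * Mn)  (scalars are absorbed into the
   first factor).  Two such representatives denote the same tensor iff they
   have the same image under every R-multilinear map into every R-module W
   (universal property of the tensor product). *)

Section Tensors.
Variable R : comPzRingType.

Definition lin (U V : lmodType R) (f : U -> V) : Prop :=
  forall (a : R) (x y : U), f (a *: x + y) = a *: f x + f y.

Definition bilin (M N W : lmodType R) (f : M -> N -> W) : Prop :=
  (forall n, lin (fun m => f m n)) /\ (forall m, lin (f m)).

Definition trilin (M N P W : lmodType R) (f : M -> N -> P -> W) : Prop :=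
  [/\ forall y z, lin (fun x => f x y z),
      forall x z, lin (fun y => f x y z) &
      forall x y, lin (f x y)].

Definition quadlin (M1 M2 M3 M4 W : lmodType R)
  (f : M1 -> M2 -> M3 -> M4 -> W) : Prop :=
  [/\ forall x2 x3 x4, lin (fun x1 => f x1 x2 x3 x4),
      forall x1 x3 x4, lin (fun x2 => f x1 x2 x3 x4),
      forall x1 x2 x4, lin (fun x3 => f x1 x2 x3 x4) &
      forall x1 x2 x3, lin (fun x4 => f x1 x2 x3 x4)].

Definition hexalin (M1 M2 M3 M4 M5 M6 W : lmodType R)
  (f : M1 -> M2 -> M3 -> M4 -> M5 -> M6 -> W) : Prop :=
  (forall x2 x3 x4 x5 x6, lin (fun x1 => f x1 x2 x3 x4 x5 x6)) /\
  (forall x1 x3 x4 x5 x6, lin (fun x2 => f x1 x2 x3 x4 x5 x6)) /\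
  (forall x1 x2 x4 x5 x6, lin (fun x3 => f x1 x2 x3 x4 x5 x6)) /\
  (forall x1 x2 x3 x5 x6, lin (fun x4 => f x1 x2 x3 x4 x5 x6)) /\
  (forall x1 x2 x3 x4 x6, lin (fun x5 => f x1 x2 x3 x4 x5 x6)) /\
  (forall x1 x2 x3 x4 x5, lin (fun x6 => f x1 x2 x3 x4 x5 x6)).

Definition eqT2 (M N : lmodType R) (s t : seq (M * N)) : Prop :=
  forall (W : lmodType R) (f : M -> N -> W), bilin f ->
    \sum_(x <- s) f x.1 x.2 = \sum_(x <- t) f x.1 x.2.

Definition eqT3 (M N P : lmodType R) (s t : seq (M * N * P)) : Prop :=
  forall (W : lmodType R) (f : M -> N -> P -> W), trilin f ->
    \sum_(x <- s) f x.1.1 x.1.2 x.2 = \sum_(x <- t) f x.1.1 x.1.2 x.2.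

Definition eqT4 (M1 M2 M3 M4 : lmodType R) (s t : seq (M1 * M2 * M3 * M4)) : Prop :=
  forall (W : lmodType R) (f : M1 -> M2 -> M3 -> M4 -> W), quadlin f ->
    \sum_(x <- s) f x.1.1.1 x.1.1.2 x.1.2 x.2
    = \sum_(x <- t) f x.1.1.1 x.1.1.2 x.1.2 x.2.

Definition eqT6 (M1 M2 M3 M4 M5 M6 : lmodType R)
  (s t : seq (M1 * M2 * M3 * M4 * M5 * M6)) : Prop :=
  forall (W : lmodType R) (f : M1 -> M2 -> M3 -> M4 -> M5 -> M6 -> W), hexalin f ->
    \sum_(x <- s) f x.1.1.1.1.1 x.1.1.1.1.2 x.1.1.1.2 x.1.1.2 x.1.2 x.2
    = \sum_(x <- t) f x.1.1.1.1.1 x.1.1.1.1.2 x.1.1.1.2 x.1.1.2 x.1.2 x.2.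

(* A coalgebra structure (Delta, eps) on the R-module C.  Delta c is a
   representative of the tensor c^(0) (x) c^(1) in C (x) C. *)
Definition is_coalgebra (C : lmodType R) (D : C -> seq (C * C)) (e : C -> R) : Prop :=
  [/\
      forall (a : R) (x y : C),
        eqT2 (D (a *: x + y)) ([seq (a *: p.1, p.2) | p <- D x] ++ D y),
      forall (a : R) (x y : C), e (a *: x + y) = a * e x + e y,
      forall c : C,
        eqT3 (flatten [seq [seq (q.1, q.2, p.2) | q <- D p.1] | p <- D c])
             (flatten [seq [seq (p.1, q.1, q.2) | q <- D p.2] | p <- D c]),
      forall c : C, \sum_(p <- D c) e p.1 *: p.2 = c &
      forall c : C, \sum_(p <- D c) e p.2 *: p.1 = c].

Definition is_Hopf_algebra (H : algType R) (D : H -> seq (H * H)) (e : H -> R)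
  (S : H -> H) : Prop :=
  is_coalgebra D e /\
  (forall g h : H, eqT2 (D (g * h)) [seq (p.1 * q.1, p.2 * q.2) | p <- D g, q <- D h]) /\
  eqT2 (D 1) [:: (1, 1)] /\
  (forall g h : H, e (g * h) = e g * e h) /\
  e 1 = 1 /\
  lin S /\
  (forall h : H, \sum_(p <- D h) S p.1 * p.2 = (e h) *: 1
              /\ \sum_(p <- D h) p.1 * S p.2 = (e h) *: 1).

Definition Delta3 (H : lmodType R) (D : H -> seq (H * H)) (h : H) : seq (H * H * H * H) :=
  flatten [seq flatten [seq [seq (p.1, q.1, r.1, r.2) | r <- D q.2] | q <- D p.2]
          | p <- D h].

Definition is_module_coalgebra (H : algType R) (DH : H -> seq (H * H)) (eH : H -> R)
  (C : lmodType R) (DC : C -> seq (C * C)) (eC : C -> R) (act : H -> C -> C) : Prop :=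
  is_coalgebra DC eC /\
  bilin act /\
  (forall c, act 1 c = c) /\
  (forall g h c, act (g * h) c = act g (act h c)) /\
  (forall h c, eqT2 (DC (act h c))
                    [seq (act p.1 q.1, act p.2 q.2) | p <- DH h, q <- DC c]) /\
  (forall h c, eC (act h c) = eH h * eC c).

Definition smash_Delta (H : algType R) (DH : H -> seq (H * H)) (S Sinv : H -> H)
  (C : lmodType R) (DC : C -> seq (C * C)) (act : H -> C -> C) (a : C) (g : H)
  : seq ((C * H) * (C * H)) :=
  [seq ((x.1, q.1.1.2), (act (Sinv (q.1.1.1 * S q.1.2)) x.2, q.2))
  | x <- DC a, q <- Delta3 DH g].

Definition flat4 (C H : Type) (p : (C * H) * (C * H)) : C * H * C * H :=
  (p.1.1, p.1.2, p.2.1, p.2.2).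

End Tensors.

From mathcomp Require Import all_boot all_algebra zify.
Import GRing.Theory.
Local Open Scope ring_scope.
Set Implicit Arguments. Unset Strict Implicit. Unset Printing Implicit Defensive.

(* Tensors are only accessed through their universal property, so every
   identity to prove is an identity between iterated Sweedler sums
   Σ F(m^(0), ..., m^(n)) with F multilinear; coassociativity allows such a sum
   to be re-split at any position.
   Since S^{-1}(g^(0) S(g^(2))) = g^(2) S^{-1}(g^(0)), both sides of the
   coassociativity identity for C ⋊ H reduce to the normal form
     Σ K(a^(0), g^(2), g^(3) S^{-1}(g^(1)) . a^(1), g^(4), g^(5) S^{-1}(g^(0)) . a^(2), g^(6)):
   the left side by coassociativity of C and H alone, the right side because
   the action is a coalgebra map, S^{-1} is an anti-algebra and anti-coalgebra
   map (as S is), and Σ S^{-1}(h^(1)) h^(0) = ε(h) cancels the surplus factors.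
   The counit laws follow from the same antipode identities. *)

Section Linear.
Variable R : comPzRingType.
Implicit Types U V W : lmodType R.

Lemma lin0 U V (f : U -> V) : lin f -> f 0 = 0.
Proof.
move=> hf; have := hf 1 0 0; rewrite !scale1r addr0 => h.
by apply: (addrI (f 0)); rewrite -h addr0.
Qed.

Lemma linZ U V (f : U -> V) a x : lin f -> f (a *: x) = a *: f x.
Proof. by move=> hf; rewrite -[a *: x]addr0 hf (lin0 hf) addr0. Qed.

Lemma linD U V (f : U -> V) x y : lin f -> f (x + y) = f x + f y.
Proof. by move=> hf; have := hf 1 x y; rewrite !scale1r. Qed.

Lemma lin_sum U V (f : U -> V) I (r : seq I) (F : I -> U) : lin f ->
  f (\sum_(i <- r) F i) = \sum_(i <- r) f (F i).
Proof.
move=> hf; elim: r => [|i r IH]; first by rewrite !big_nil (lin0 hf).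
by rewrite !big_cons (linD _ _ hf) IH.
Qed.

Lemma lin_sumZ U V (f : U -> V) I (r : seq I) (c : I -> R) (F : I -> U) : lin f ->
  \sum_(i <- r) c i *: f (F i) = f (\sum_(i <- r) c i *: F i).
Proof. by move=> hf; rewrite (lin_sum _ _ hf); apply: eq_bigr => i _; rewrite (linZ _ _ hf). Qed.

Lemma lin_id U : lin (fun x : U => x).
Proof. by []. Qed.

Lemma lin_comp U V W (f : V -> W) (g : U -> V) : lin f -> lin g -> lin (fun x => f (g x)).
Proof. by move=> hf hg a x y; rewrite hg hf. Qed.

Lemma lin_big U V I (r : seq I) (G : I -> U -> V) : (forall i, lin (G i)) ->
  lin (fun x => \sum_(i <- r) G i x).
Proof.
move=> hG a x y; rewrite scaler_sumr -big_split /=.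
by apply: eq_bigr => i _; rewrite hG.
Qed.

Lemma lin_scaler U V (c : R) (g : U -> V) : lin g -> lin (fun x => c *: g x).
Proof. by move=> hg a x y; rewrite hg scalerDr !scalerA mulrC. Qed.

Lemma lin_mull (A : algType R) U (g : U -> A) h : lin g -> lin (fun x => g x * h).
Proof. by move=> hg a x y; rewrite hg mulrDl scalerAl. Qed.

Lemma lin_mulr (A : algType R) U (g : U -> A) h : lin g -> lin (fun x => h * g x).
Proof. by move=> hg a x y; rewrite hg mulrDr scalerAr. Qed.

End Linear.

Section Sweedler.
Variables (R : comPzRingType) (M : lmodType R) (D : M -> seq (M * M)).
Implicit Types U V W : lmodType R.

(* [sweedler n m F] is Σ F [:: m^(0); ...; m^(n)], computed by iterating [D]
   on the last tensor factor. *)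
Fixpoint sweedler W (n : nat) (m : M) (F : seq M -> W) : W :=
  if n is n'.+1 then \sum_(p <- D m) sweedler n' p.2 (fun s => F (p.1 :: s))
  else F [:: m].

Definition multilin W (n : nat) (F : seq M -> W) :=
  forall l r, (size l + size r)%N = n -> lin (fun x => F (l ++ x :: r)).

Lemma sweedlerS W n m (F : seq M -> W) :
  sweedler n.+1 m F = \sum_(p <- D m) sweedler n p.2 (fun s => F (p.1 :: s)).
Proof. by []. Qed.

Lemma sweedler0 W m (F : seq M -> W) : sweedler 0 m F = F [:: m].
Proof. by []. Qed.

Lemma sweedler1E W m (F : seq M -> W) : sweedler 1 m F = \sum_(p <- D m) F [:: p.1; p.2].
Proof. by []. Qed.

Lemma eq_sweedler W n m (F G : seq M -> W) :
  (forall s, size s = n.+1 -> F s = G s) -> sweedler n m F = sweedler n m G.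
Proof.
elim: n m F G => [|n IH] m F G h /=; first exact: h.
by apply: eq_bigr => p _; apply: IH => s hs; apply: h => /=; rewrite hs.
Qed.

Lemma sweedler_lin W V n m (F : seq M -> W) (f : W -> V) : lin f ->
  sweedler n m (fun s => f (F s)) = f (sweedler n m F).
Proof.
move=> hf; elim: n m F => [|n IH] m F //=.
by rewrite (lin_sum _ _ hf); apply: eq_bigr => p _; rewrite IH.
Qed.

Lemma sweedler_sum W n m I (r : seq I) (F : I -> seq M -> W) :
  sweedler n m (fun s => \sum_(i <- r) F i s) = \sum_(i <- r) sweedler n m (F i).
Proof.
elim: n m F => [|n IH] m F //=.
by rewrite exchange_big /=; apply: eq_bigr => p _; rewrite IH.
Qed.

Lemma lin_sweedler_fun U W n m (F : U -> seq M -> W) :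
  (forall s, size s = n.+1 -> lin (fun x => F x s)) -> lin (fun x => sweedler n m (F x)).
Proof.
elim: n m F => [|n IH] m F h /=; first exact: h.
apply: lin_big => p; apply: IH => s hs; apply: h => /=; by rewrite hs.
Qed.

Lemma multilin_cons W n (F : seq M -> W) y :
  multilin n.+1 F -> multilin n (fun s => F (y :: s)).
Proof. by move=> h l r hs; apply: (h (y :: l) r) => /=; rewrite addSn hs. Qed.

End Sweedler.
Arguments sweedler : simpl never.

Lemma exchange_sweedler (R : comPzRingType) (M M' W : lmodType R)
  (D : M -> seq (M * M)) (D' : M' -> seq (M' * M')) n k m m'
  (G : seq M -> seq M' -> W) :
  sweedler D n m (fun s => sweedler D' k m' (G s)) =
  sweedler D' k m' (fun t => sweedler D n m (fun s => G s t)).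
Proof.
elim: n m G => [|n IH] m G.
  by rewrite sweedler0; apply: eq_sweedler => t _; rewrite sweedler0.
rewrite sweedlerS; under eq_bigr do rewrite IH.
by rewrite -sweedler_sum; apply: eq_sweedler => t _; rewrite sweedlerS.
Qed.

Section Coalgebra.
Variables (R : comPzRingType) (M : lmodType R).
Variables (D : M -> seq (M * M)) (e : M -> R).
Hypothesis hC : is_coalgebra D e.
Implicit Types U W V : lmodType R.

Lemma counit_lin a x y : e (a *: x + y) = a * e x + e y.
Proof. by case: hC. Qed.

Lemma counitl c : \sum_(p <- D c) e p.1 *: p.2 = c.
Proof. by case: hC. Qed.

Lemma counitr c : \sum_(p <- D c) e p.2 *: p.1 = c.
Proof. by case: hC. Qed.

Lemma counit0 : e 0 = 0.
Proof.
have := counit_lin 1 0 0; rewrite scale1r addr0 mul1r => h.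
by apply: (addrI (e 0)); rewrite -h addr0.
Qed.

Lemma counitZ a x : e (a *: x) = a * e x.
Proof. by have := counit_lin a x 0; rewrite !addr0 counit0 addr0. Qed.

Lemma counit_sum I (r : seq I) (F : I -> M) :
  e (\sum_(i <- r) F i) = \sum_(i <- r) e (F i).
Proof.
elim: r => [|i r IH]; first by rewrite !big_nil counit0.
by have := counit_lin 1 (F i) (\sum_(j <- r) F j); rewrite !big_cons scale1r mul1r IH.
Qed.

Lemma lin_counit_scale U W (g : U -> M) (v : W) : lin g -> lin (fun x => e (g x) *: v).
Proof. by move=> hg a x y; rewrite hg counit_lin scalerDl scalerA. Qed.

Lemma sweedler_counitl W (f : M -> W) c : lin f ->
  sweedler D 1 c (fun t => e t`_0 *: f t`_1) = f c.
Proof.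
by move=> hf; rewrite sweedler1E /= (lin_sumZ _ (fun p => e p.1) (fun p => p.2) hf) counitl.
Qed.

Lemma sweedler_counitr W (f : M -> W) c : lin f ->
  sweedler D 1 c (fun t => e t`_1 *: f t`_0) = f c.
Proof.
by move=> hf; rewrite sweedler1E /= (lin_sumZ _ (fun p => e p.2) (fun p => p.1) hf) counitr.
Qed.

Lemma lin_Delta_sum W (G : M -> M -> W) :
  (forall y, lin (fun x => G x y)) -> (forall x, lin (G x)) ->
  lin (fun m => \sum_(p <- D m) G p.1 p.2).
Proof.
move=> h1 h2 a x y; case: hC => hD _ _ _ _.
rewrite (hD a x y W G) ?big_cat ?big_map //= scaler_sumr; congr (_ + _).
by apply: eq_bigr => p _; rewrite (linZ _ _ (h1 _)).
Qed.

Lemma lin_sweedler W n (F : seq M -> W) : multilin n F -> lin (fun m => sweedler D n m F).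
Proof.
elim: n F => [|n IH] F h.
  by move=> a x y; rewrite !sweedler0; apply: (h [::] [::]).
move=> a x y; rewrite !sweedlerS.
apply: (lin_Delta_sum (G := fun u v => sweedler D n v (fun s => F (u :: s)))) => [v|u].
  by apply: lin_sweedler_fun => s hs; apply: (h [::] s) => /=; rewrite hs.
exact/IH/multilin_cons.
Qed.

Lemma lin_sweedler_comp U W n (F : seq M -> W) (g : U -> M) : multilin n F -> lin g ->
  lin (fun x => sweedler D n (g x) F).
Proof. by move=> h; apply: lin_comp (lin_sweedler h). Qed.

Lemma coassoc_sum W (G : M -> M -> M -> W) c :
  (forall y z, lin (fun x => G x y z)) -> (forall x z, lin (fun y => G x y z)) ->
  (forall x y, lin (G x y)) ->
  \sum_(p <- D c) \sum_(q <- D p.1) G q.1 q.2 p.2 =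
  \sum_(p <- D c) \sum_(q <- D p.2) G p.1 q.1 q.2.
Proof.
move=> h1 h2 h3; case: hC => _ _ hA _ _.
have := hA c W G; rewrite !big_flatten /= !big_map.
by under eq_bigr do rewrite big_map; under [RHS]eq_bigr do rewrite big_map; apply.
Qed.

(* Generalised coassociativity: an (n+1)-fold coproduct may be refined by
   applying Δ to any of its factors [i]. *)
Lemma sweedler_split W n i m (L F : seq M -> W) : (i <= n)%N -> multilin n.+1 F ->
  (forall s, size s = n.+1 ->
     L s = sweedler D 1 s`_i (fun t => F (take i s ++ t`_0 :: t`_1 :: drop i.+1 s))) ->
  sweedler D n m L = sweedler D n.+1 m F.
Proof.
elim: n i m L F => [|n IH] [|i] m L F // hi hF hL.
- by rewrite sweedler0 hL.
- rewrite sweedlerS (sweedlerS _ n.+1).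
  transitivity (\sum_(p <- D m) \sum_(q <- D p.1)
                  sweedler D n p.2 (fun s => F (q.1 :: q.2 :: s))).
    apply: eq_bigr => p _; rewrite -sweedler_sum.
    by apply: eq_sweedler => s hs; rewrite hL /= ?hs // sweedler1E drop0.
  under [RHS]eq_bigr do rewrite sweedlerS.
  apply: (@coassoc_sum W (fun x y z => sweedler D n z (fun s => F (x :: y :: s)))).
  + move=> y z; apply: lin_sweedler_fun => s hs; apply: (hF [::] (y :: s)) => /=; by rewrite hs.
  + move=> x z; apply: lin_sweedler_fun => s hs; apply: (hF [:: x] s) => /=; by rewrite hs.
  + move=> x y; apply/lin_sweedler/(multilin_cons (F := fun t => F (x :: t))).
    exact: multilin_cons.
- rewrite sweedlerS (sweedlerS _ n.+1); apply: eq_bigr => p _.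
  apply: (IH i) => //; first exact: multilin_cons.
  by move=> s hs; rewrite hL //= hs.
Qed.

End Coalgebra.

(* Closes linearity side conditions. Besides the closure lemmas above it
   chains the facts [lin g -> lin (fun x => φ (g x))] found in the context,
   which is what the corresponding local [Let]s of each section are for. *)
Ltac lin_solve := cbv beta; solve [ exact: lin_id
  | apply: lin_big => ?; lin_solve
  | apply: lin_mull; lin_solve
  | apply: lin_mulr; lin_solve
  | apply: lin_sweedler_fun => ? ?; lin_solve
  | apply: lin_scaler; lin_solve
  | match goal with h : _ |- _ => apply: h; solve [multilin_solve | lin_solve] end ]
with multilin_solve := let l := fresh "l" in let r := fresh "r" in let Hs := fresh "Hs" in
  move=> l r Hs; multilin_loop l Hs
with multilin_loop l Hs := case: l Hs => [|? l] Hs;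
  [rewrite /=; lin_solve | first [by exfalso; move: Hs => /=; lia | multilin_loop l Hs]].

Section Multilin1.
Variables (R : comPzRingType) (M W : lmodType R) (F : seq M -> W).

Lemma multilin1_bilin : multilin 1 F -> bilin (fun x y => F [:: x; y]).
Proof. by move=> hF; split=> [y|x]; [apply: (hF [::] [:: y]) | apply: (hF [:: x] [::])]. Qed.

Lemma multilin1_linl : multilin 1 F ->
  forall (U : lmodType R) (g : U -> M) c, lin g -> lin (fun x => F [:: g x; c]).
Proof.
by move=> hF U g c; apply: (lin_comp (f := fun y => F [:: y; c])); apply: (hF [::] [:: c]).
Qed.

Lemma multilin1_linr : multilin 1 F ->
  forall (U : lmodType R) (g : U -> M) c, lin g -> lin (fun x => F [:: c; g x]).
Proof.
by move=> hF U g c; apply: (lin_comp (f := fun y => F [:: c; y])); apply: (hF [:: c] [::]).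
Qed.

End Multilin1.

Section Hopf.
Variables (R : comPzRingType) (H : algType R).
Variables (DH : H -> seq (H * H)) (eH : H -> R) (S : H -> H).
Hypothesis hH : is_Hopf_algebra DH eH S.
Implicit Types U W V : lmodType R.

Let hC : is_coalgebra DH eH.
Proof. by case: hH. Qed.

Let DeltaM g h : eqT2 (DH (g * h)) [seq (p.1 * q.1, p.2 * q.2) | p <- DH g, q <- DH h].
Proof. by case: hH => _ []. Qed.

Let Delta1 : eqT2 (DH 1) [:: (1, 1)].
Proof. by case: hH => _ [_ []]. Qed.

Let counitM g h : eH (g * h) = eH g * eH h.
Proof. by case: hH => _ [_ [_ []]]. Qed.

Let counit1 : eH 1 = 1.
Proof. by case: hH => _ [_ [_ [_ []]]]. Qed.

Let lin_S : lin S.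
Proof. by case: hH => _ [_ [_ [_ [_ []]]]]. Qed.

Let antipode_sum h :
  \sum_(p <- DH h) S p.1 * p.2 = eH h *: 1 /\ \sum_(p <- DH h) p.1 * S p.2 = eH h *: 1.
Proof. by case: hH => _ [_ [_ [_ [_ []]]]]. Qed.

Let lin_S_comp U (g : U -> H) : lin g -> lin (fun x => S (g x)).
Proof. exact: lin_comp. Qed.
Let lin_sweedlerH := lin_sweedler_comp hC.
Let lin_counitH := lin_counit_scale hC.

Lemma sweedler_mul W (F : seq H -> W) g h : multilin 1 F ->
  sweedler DH 1 (g * h) F =
  sweedler DH 1 g (fun s => sweedler DH 1 h (fun t => F [:: s`_0 * t`_0; s`_1 * t`_1])).
Proof.
move=> hF; rewrite sweedler1E (DeltaM g h (multilin1_bilin hF)) big_allpairs_dep.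
by apply: eq_bigr => p _; rewrite sweedler1E.
Qed.

Lemma sweedler_unit W (F : seq H -> W) : multilin 1 F -> sweedler DH 1 1 F = F [:: 1; 1].
Proof. by move=> hF; rewrite sweedler1E (Delta1 (multilin1_bilin hF)) big_seq1. Qed.

Lemma antipodeL g : sweedler DH 1 g (fun t => S t`_0 * t`_1) = eH g *: 1.
Proof. by rewrite sweedler1E; case: (antipode_sum g). Qed.

Lemma antipodeR g : sweedler DH 1 g (fun t => t`_0 * S t`_1) = eH g *: 1.
Proof. by rewrite sweedler1E; case: (antipode_sum g). Qed.

Lemma antipode1 : S 1 = 1.
Proof. by have := antipodeL 1; rewrite counit1 scale1r sweedler_unit ?mulr1 //; multilin_solve. Qed.

Lemma counit_antipode x : eH (S x) = eH x.
Proof.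
have := congr1 eH (antipodeL x).
rewrite sweedler1E (counitZ hC) counit1 mulr1 (counit_sum hC) => <-.
transitivity (eH (S (\sum_(p <- DH x) eH p.2 *: p.1))); first by rewrite (counitr hC).
rewrite (lin_sum _ _ lin_S) (counit_sum hC); apply: eq_bigr => p _.
by rewrite (linZ _ _ lin_S) (counitZ hC) counitM mulrC.
Qed.

(* [Z] collapses to S(y) S(x) through Σ S((x y)^(0)) (x y)^(1) = ε(x y), and to
   S(x y) through Σ y^(1) S(y^(2)) = ε(y) and then Σ x^(1) S(x^(2)) = ε(x). *)
Section AntipodeMul.
Variables x y : H.

Let Z := sweedler DH 2 x (fun s => sweedler DH 2 y (fun t =>
  S (s`_0 * t`_0) * (s`_1 * t`_1) * (S t`_2 * S s`_2))).

Let Z_reverse : Z = S y * S x.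
Proof.
have -> : Z = sweedler DH 1 x (fun s => sweedler DH 1 y (fun t =>
                eH (s`_0 * t`_0) *: (S t`_1 * S s`_1))).
  symmetry; apply: (sweedler_split hC (i := 0)) => //; first multilin_solve.
  case=> [|s0 [|s1 [|]]] //= _.
  rewrite exchange_sweedler; apply: (sweedler_split hC (i := 0)) => //; first multilin_solve.
  case=> [|t0 [|t1 [|]]] //= _.
  rewrite exchange_sweedler -(@sweedler_mul _ (fun r => S r`_0 * r`_1 * (S t1 * S s1)));
    last multilin_solve.
  have hl : lin (fun z => z * (S t1 * S s1)) by lin_solve.
  by rewrite (sweedler_lin DH 1 _ (fun r => S r`_0 * r`_1) hl) antipodeL /= -scalerAl mul1r.
transitivity (sweedler DH 1 x (fun s => eH s`_0 *: (S y * S s`_1))).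
  apply: eq_sweedler => s _.
  under eq_sweedler do rewrite counitM -scalerA.
  rewrite (sweedler_lin _ _ _ (fun t => eH t`_0 *: (S t`_1 * S s`_1)) (lin_scaler _ (@lin_id _ _))).
  by rewrite (sweedler_counitl hC (f := fun z => S z * S s`_1)) //; lin_solve.
by rewrite (sweedler_counitl hC (f := fun z => S y * S z)) //; lin_solve.
Qed.

Let Z_direct : Z = S (x * y).
Proof.
transitivity (sweedler DH 2 x (fun s => S (s`_0 * y) * (s`_1 * S s`_2))).
  apply: eq_sweedler => s _.
  transitivity (sweedler DH 1 y (fun t => eH t`_1 *: (S (s`_0 * t`_0) * (s`_1 * S s`_2)))).
    symmetry; apply: (sweedler_split hC (i := 1)) => //; first multilin_solve.
    case=> [|t0 [|t1 [|]]] //= _.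
    have -> : sweedler DH 1 t1 (fun t => S (s`_0 * t0) * (s`_1 * t`_0) * (S t`_1 * S s`_2))
       = sweedler DH 1 t1 (fun t => S (s`_0 * t0) * (s`_1 * (t`_0 * S t`_1) * S s`_2)).
      by apply: eq_sweedler => v _; rewrite !mulrA.
    have hl : lin (fun z => S (s`_0 * t0) * (s`_1 * z * S s`_2)) by lin_solve.
    by rewrite (sweedler_lin DH 1 t1 (fun t => t`_0 * S t`_1) hl) antipodeR (linZ _ _ hl) mulr1.
  by rewrite (sweedler_counitr hC (f := fun z => S (s`_0 * z) * (s`_1 * S s`_2))) //; lin_solve.
transitivity (sweedler DH 1 x (fun s => eH s`_1 *: S (s`_0 * y))).
  symmetry; apply: (sweedler_split hC (i := 1)) => //; first multilin_solve.
  case=> [|s0 [|s1 [|]]] //= _.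
  have hl : lin (fun z => S (s0 * y) * z) by lin_solve.
  by rewrite (sweedler_lin DH 1 s1 (fun t => t`_0 * S t`_1) hl) antipodeR (linZ _ _ hl) mulr1.
by rewrite (sweedler_counitr hC (f := fun z => S (z * y))) //; lin_solve.
Qed.

Lemma antipodeM : S (x * y) = S y * S x.
Proof. by rewrite -Z_direct Z_reverse. Qed.

End AntipodeMul.

Section AntipodeComul.
Variables (W : lmodType R) (F : seq H -> W).

(* The classical proof that [S] is an anti-coalgebra map: [Z g] collapses to
   Δ(S g) through the antipode identities for g^(2) S(g^(3)) and then
   g^(1) S(g^(4)), and to (S ⊗ S) Δ^op(g) through Δ(S g^(0) g^(1)) = ε(g^(0)) 1 ⊗ 1. *)
Let Z g := sweedler DH 4 g (fun s => sweedler DH 1 (S s`_0) (fun p =>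
  F [:: p`_0 * s`_1 * S s`_4; p`_1 * (s`_2 * S s`_3)])).

Let Z_opposite g : multilin 1 F -> Z g = sweedler DH 1 g (fun t => F [:: S t`_1; S t`_0]).
Proof.
move=> hF; have hF0 := multilin1_linl hF; have hF1 := multilin1_linr hF.
transitivity (sweedler DH 3 g (fun s => sweedler DH 1 (S s`_0 * s`_1) (fun p =>
                F [:: p`_0 * S s`_3; p`_1 * S s`_2]))).
  symmetry; apply: (sweedler_split hC (i := 1)) => //; first multilin_solve.
  case=> [|s0 [|s1 [|s2 [|s3 [|]]]]] //= _.
  rewrite sweedler_mul; last multilin_solve.
  by rewrite exchange_sweedler; apply: eq_sweedler => t _; apply: eq_sweedler => p _; rewrite mulrA.
transitivity (sweedler DH 2 g (fun s => eH s`_0 *: F [:: S s`_2; S s`_1])).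
  symmetry; apply: (sweedler_split hC (i := 0)) => //; first multilin_solve.
  case=> [|s0 [|s1 [|s2 [|]]]] //= _.
  have hl : lin (fun y => sweedler DH 1 y (fun p => F [:: p`_0 * S s2; p`_1 * S s1])).
    by apply: (lin_sweedler hC); multilin_solve.
  rewrite (sweedler_lin DH 1 s0 (fun t => S t`_0 * t`_1) hl) antipodeL (linZ _ _ hl).
  by rewrite sweedler_unit /= ?mul1r //; multilin_solve.
symmetry; apply: (sweedler_split hC (i := 0)) => //; first multilin_solve.
case=> [|s0 [|s1 [|]]] //= _.
by rewrite (sweedler_counitl hC (f := fun y => F [:: S s1; S y])) //; lin_solve.
Qed.

Let Z_Delta g : multilin 1 F -> Z g = sweedler DH 1 (S g) F.
Proof.
move=> hF; have hF0 := multilin1_linl hF; have hF1 := multilin1_linr hF.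
transitivity (sweedler DH 3 g (fun s => eH s`_2 *: sweedler DH 1 (S s`_0) (fun p =>
                F [:: p`_0 * s`_1 * S s`_3; p`_1]))).
  symmetry; apply: (sweedler_split hC (i := 2)) => //; first multilin_solve.
  case=> [|s0 [|s1 [|s2 [|s3 [|]]]]] //= _.
  have hl : lin (fun y => sweedler DH 1 (S s0) (fun p => F [:: p`_0 * s1 * S s3; p`_1 * y])).
    by lin_solve.
  rewrite (sweedler_lin DH 1 s2 (fun t => t`_0 * S t`_1) hl) antipodeR (linZ _ _ hl).
  by congr (_ *: _); apply: eq_sweedler => p _; rewrite mulr1.
transitivity (sweedler DH 2 g (fun s => sweedler DH 1 (S s`_0) (fun p =>
                F [:: p`_0 * s`_1 * S s`_2; p`_1]))).
  symmetry; apply: (sweedler_split hC (i := 2)) => //; first multilin_solve.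
  case=> [|s0 [|s1 [|s2 [|]]]] //= _.
  by rewrite (sweedler_counitl hC (f := fun y => sweedler DH 1 (S s0) (fun p =>
                F [:: p`_0 * s1 * S y; p`_1]))) //; lin_solve.
transitivity (sweedler DH 1 g (fun s => eH s`_1 *: sweedler DH 1 (S s`_0) F)).
  symmetry; apply: (sweedler_split hC (i := 1)) => //; first multilin_solve.
  case=> [|s0 [|s1 [|]]] //= _.
  have hl : lin (fun y => sweedler DH 1 (S s0) (fun p => F [:: p`_0 * y; p`_1])) by lin_solve.
  have -> : sweedler DH 1 s1 (fun t => sweedler DH 1 (S s0) (fun p =>
                F [:: p`_0 * t`_0 * S t`_1; p`_1]))
     = sweedler DH 1 s1 (fun t => sweedler DH 1 (S s0) (fun p =>
                F [:: p`_0 * (t`_0 * S t`_1); p`_1])).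
    by apply: eq_sweedler => t _; apply: eq_sweedler => p _; rewrite mulrA.
  rewrite (sweedler_lin DH 1 s1 (fun t => t`_0 * S t`_1) hl) antipodeR (linZ _ _ hl).
  by congr (_ *: _); apply: eq_sweedler => -[|p0 [|p1 [|]]] //= _; rewrite mulr1.
by rewrite (sweedler_counitr hC (f := fun y => sweedler DH 1 (S y) F)) //; lin_solve.
Qed.

Lemma sweedler_antipode g : multilin 1 F ->
  sweedler DH 1 (S g) F = sweedler DH 1 g (fun t => F [:: S t`_1; S t`_0]).
Proof. by move=> hF; rewrite -Z_Delta // Z_opposite. Qed.

End AntipodeComul.

Section InverseAntipode.
Variable Sinv : H -> H.
Hypotheses (SK : cancel S Sinv) (SinvK : cancel Sinv S).

Lemma lin_Sinv : lin Sinv.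
Proof. by move=> a x y; rewrite -{1}(SinvK x) -{1}(SinvK y) -lin_S SK. Qed.

Lemma SinvM x y : Sinv (x * y) = Sinv y * Sinv x.
Proof. by rewrite -{1}(SinvK x) -{1}(SinvK y) -antipodeM SK. Qed.

Lemma Sinv_mulS x y : Sinv (x * S y) = y * Sinv x.
Proof. by rewrite SinvM SK. Qed.

Lemma Sinv1 : Sinv 1 = 1.
Proof. by rewrite -{1}antipode1 SK. Qed.

Lemma counit_Sinv x : eH (Sinv x) = eH x.
Proof. by rewrite -{2}(SinvK x) counit_antipode. Qed.

Let lin_Sinv_comp U (g : U -> H) : lin g -> lin (fun x => Sinv (g x)).
Proof. exact/lin_comp/lin_Sinv. Qed.

Lemma sweedler_Sinv W (F : seq H -> W) g : multilin 1 F ->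
  sweedler DH 1 (Sinv g) F = sweedler DH 1 g (fun t => F [:: Sinv t`_1; Sinv t`_0]).
Proof.
move=> hF; have hF0 := multilin1_linl hF; have hF1 := multilin1_linr hF.
rewrite -{2}(SinvK g) sweedler_antipode; last multilin_solve.
by apply: eq_sweedler => -[|t0 [|t1 [|]]] //= _; rewrite !SK.
Qed.

Lemma antipodeVL g : sweedler DH 1 g (fun t => Sinv t`_1 * t`_0) = eH g *: 1.
Proof.
have := congr1 Sinv (antipodeL g).
rewrite -(sweedler_lin DH 1 g (fun t => S t`_0 * t`_1) lin_Sinv) (linZ _ _ lin_Sinv) Sinv1 => <-.
by apply: eq_sweedler => t _; rewrite SinvM SK.
Qed.

Lemma antipodeVR g : sweedler DH 1 g (fun t => t`_1 * Sinv t`_0) = eH g *: 1.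
Proof.
have := congr1 Sinv (antipodeR g).
rewrite -(sweedler_lin DH 1 g (fun t => t`_0 * S t`_1) lin_Sinv) (linZ _ _ lin_Sinv) Sinv1 => <-.
by apply: eq_sweedler => t _; rewrite Sinv_mulS.
Qed.

End InverseAntipode.
End Hopf.

Section SmashCoproduct.
Variables (R : comPzRingType) (H : algType R).
Variables (DH : H -> seq (H * H)) (eH : H -> R) (S Sinv : H -> H).
Variables (C : lmodType R) (DC : C -> seq (C * C)) (eC : C -> R) (act : H -> C -> C).
Hypothesis hH : is_Hopf_algebra DH eH S.
Hypotheses (SK : cancel S Sinv) (SinvK : cancel Sinv S).
Hypothesis hM : is_module_coalgebra DH eH DC eC act.
Implicit Types U W V : lmodType R.

Let hCH : is_coalgebra DH eH.
Proof. by case: hH. Qed.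

Let counitM g h : eH (g * h) = eH g * eH h.
Proof. by case: hH => _ [_ [_ []]]. Qed.

Let hCC : is_coalgebra DC eC.
Proof. by case: hM. Qed.

Let act1 c : act 1 c = c.
Proof. by case: hM => _ [_ []]. Qed.

Let actM g h c : act (g * h) c = act g (act h c).
Proof. by case: hM => _ [_ [_ []]]. Qed.

Let Delta_act h c :
  eqT2 (DC (act h c)) [seq (act p.1 q.1, act p.2 q.2) | p <- DH h, q <- DC c].
Proof. by case: hM => _ [_ [_ [_ []]]]. Qed.

Let counit_act h c : eC (act h c) = eH h * eC c.
Proof. by case: hM => _ [_ [_ [_ []]]]. Qed.

Let lin_act_comp1 U (g : U -> H) c : lin g -> lin (fun x => act (g x) c).
Proof. by case: hM => _ [[hlin _] _]; apply: lin_comp (hlin c). Qed.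

Let lin_act_comp2 U (g : U -> C) h : lin g -> lin (fun x => act h (g x)).
Proof. by case: hM => _ [[_ hlin] _]; apply: lin_comp (hlin h). Qed.

Let lin_Sinv_comp U (g : U -> H) : lin g -> lin (fun x => Sinv (g x)).
Proof. exact/lin_comp/(lin_Sinv hH SK SinvK). Qed.
Let lin_sweedlerH := lin_sweedler_comp hCH.
Let lin_counitH := lin_counit_scale hCH.

Lemma Delta3E W (Psi : H * H * H * H -> W) g :
  \sum_(q <- Delta3 DH g) Psi q = sweedler DH 3 g (fun s => Psi (s`_0, s`_1, s`_2, s`_3)).
Proof.
rewrite /Delta3 big_flatten /= big_map sweedlerS; apply: eq_bigr => p _.
rewrite big_flatten /= big_map sweedlerS; apply: eq_bigr => q _.
by rewrite big_map sweedlerS; apply: eq_bigr => r _.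
Qed.

Lemma smash_DeltaE W (Phi : (C * H) * (C * H) -> W) a g :
  \sum_(p <- smash_Delta DH S Sinv DC act a g) Phi p =
  sweedler DC 1 a (fun x => sweedler DH 3 g (fun q =>
    Phi ((x`_0, q`_1), (act (q`_2 * Sinv q`_0) x`_1, q`_3)))).
Proof.
rewrite /smash_Delta big_allpairs_dep sweedler1E; apply: eq_bigr => x _.
by rewrite Delta3E; apply: eq_sweedler => s _; rewrite (Sinv_mulS hH SK SinvK).
Qed.

Lemma sweedler_act W (F : seq C -> W) h c : multilin 1 F ->
  sweedler DC 1 (act h c) F =
  sweedler DH 1 h (fun p => sweedler DC 1 c (fun q => F [:: act p`_0 q`_0; act p`_1 q`_1])).
Proof.
move=> hF; rewrite sweedler1E (Delta_act h c (multilin1_bilin hF)) big_allpairs_dep.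
by apply: eq_bigr => p _; rewrite sweedler1E.
Qed.

Section Linearity.
Variables (W : lmodType R) (f : C -> H -> C -> H -> W).
Hypothesis hf : quadlin f.

Let lin_f1 U (g : U -> C) x2 x3 x4 : lin g -> lin (fun x => f (g x) x2 x3 x4).
Proof. by case: hf => hlin _ _ _; apply: lin_comp (hlin x2 x3 x4). Qed.
Let lin_f2 U (g : U -> H) x1 x3 x4 : lin g -> lin (fun x => f x1 (g x) x3 x4).
Proof. by case: hf => _ hlin _ _; apply: lin_comp (hlin x1 x3 x4). Qed.
Let lin_f3 U (g : U -> C) x1 x2 x4 : lin g -> lin (fun x => f x1 x2 (g x) x4).
Proof. by case: hf => _ _ hlin _; apply: lin_comp (hlin x1 x2 x4). Qed.
Let lin_f4 U (g : U -> H) x1 x2 x3 : lin g -> lin (fun x => f x1 x2 x3 (g x)).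
Proof. by case: hf => _ _ _ hlin; apply: lin_comp (hlin x1 x2 x3). Qed.

Definition smash_sum a g :=
  \sum_(p <- smash_Delta DH S Sinv DC act a g) f p.1.1 p.1.2 p.2.1 p.2.2.

Lemma smash_sum_linl r a a' g :
  smash_sum (r *: a + a') g = r *: smash_sum a g + smash_sum a' g.
Proof. by rewrite /smash_sum !smash_DeltaE; apply: (lin_sweedler hCC); multilin_solve. Qed.

Lemma smash_sum_linr r a g g' :
  smash_sum a (r *: g + g') = r *: smash_sum a g + smash_sum a g'.
Proof.
rewrite /smash_sum !smash_DeltaE.
apply: (@lin_sweedler_fun _ _ DC H W 1 a (fun t x => sweedler DH 3 t (fun q =>
          f x`_0 q`_1 (act (q`_2 * Sinv q`_0) x`_1) q`_3))) => x _.
by apply: (lin_sweedler hCH); multilin_solve.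
Qed.

Lemma quadlin_sumZ r (s : seq ((C * H) * (C * H))) :
  \sum_(p <- s) f (r *: p.1.1) p.1.2 p.2.1 p.2.2 = r *: \sum_(p <- s) f p.1.1 p.1.2 p.2.1 p.2.2.
Proof.
rewrite scaler_sumr; apply: eq_bigr => p _.
by rewrite (linZ _ _ (lin_f1 p.1.2 p.2.1 p.2.2 (@lin_id _ _))).
Qed.

End Linearity.

Section Counit.
Variables (W : lmodType R) (f : C -> H -> W).
Hypothesis hf : bilin f.

Let lin_f1 U (g : U -> C) h : lin g -> lin (fun x => f (g x) h).
Proof. by case: hf => hlin _; apply: lin_comp (hlin h). Qed.
Let lin_f2 U (g : U -> H) c : lin g -> lin (fun x => f c (g x)).
Proof. by case: hf => _ hlin; apply: lin_comp (hlin c). Qed.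

Lemma smash_counitl a g :
  \sum_(p <- smash_Delta DH S Sinv DC act a g) f ((eC p.1.1 * eH p.1.2) *: p.2.1) p.2.2 = f a g.
Proof.
rewrite smash_DeltaE /= -(sweedler_counitl hCC (f := fun z => f z g)) //; last by lin_solve.
apply: eq_sweedler => x _.
transitivity (eC x`_0 *: sweedler DH 3 g (fun q =>
                eH q`_1 *: f (act (q`_2 * Sinv q`_0) x`_1) q`_3)).
  rewrite -sweedler_lin; last exact/lin_scaler/lin_id.
  by apply: eq_sweedler => q _; rewrite (linZ _ _ (lin_f1 _ (@lin_id _ _))) scalerA.
congr (_ *: _).
transitivity (sweedler DH 2 g (fun q => f (act (q`_1 * Sinv q`_0) x`_1) q`_2)).
  symmetry; apply: (sweedler_split hCH (i := 1)) => //; first multilin_solve.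
  case=> [|s0 [|s1 [|s2 [|]]]] //= _.
  by rewrite (sweedler_counitl hCH (f := fun z => f (act (z * Sinv s0) x`_1) s2)) //; lin_solve.
transitivity (sweedler DH 1 g (fun q => eH q`_0 *: f x`_1 q`_1)).
  symmetry; apply: (sweedler_split hCH (i := 0)) => //; first multilin_solve.
  case=> [|s0 [|s1 [|]]] //= _.
  have hl : lin (fun z => f (act z x`_1) s1) by lin_solve.
  by rewrite (sweedler_lin DH 1 s0 (fun t => t`_1 * Sinv t`_0) hl) (antipodeVR hH SK SinvK)
             (linZ _ _ hl) act1.
by rewrite (sweedler_counitl hCH (f := fun z => f x`_1 z)) //; lin_solve.
Qed.

Lemma smash_counitr a g :
  \sum_(p <- smash_Delta DH S Sinv DC act a g) f ((eC p.2.1 * eH p.2.2) *: p.1.1) p.1.2 = f a g.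
Proof.
rewrite smash_DeltaE /= -(sweedler_counitr hCC (f := fun z => f z g)) //; last by lin_solve.
apply: eq_sweedler => x _.
transitivity (eC x`_1 *: sweedler DH 3 g (fun q =>
                eH q`_0 *: (eH q`_2 *: (eH q`_3 *: f x`_0 q`_1)))).
  rewrite -sweedler_lin; last exact/lin_scaler/lin_id.
  apply: eq_sweedler => q _.
  rewrite (linZ _ _ (lin_f1 _ (@lin_id _ _))) !scalerA counit_act.
  rewrite counitM (counit_Sinv hH SinvK).
  by congr (_ *: _); congr (_ * _); rewrite mulrC mulrA mulrAC.
congr (_ *: _).
transitivity (sweedler DH 2 g (fun q => eH q`_0 *: (eH q`_2 *: f x`_0 q`_1))).
  symmetry; apply: (sweedler_split hCH (i := 2)) => //; first multilin_solve.
  case=> [|s0 [|s1 [|s2 [|]]]] //= _.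
  rewrite (sweedler_lin DH 1 s2 (fun t => eH t`_0 *: (eH t`_1 *: f x`_0 s1)));
    last exact/lin_scaler/lin_id.
  by rewrite (sweedler_counitl hCH (f := fun z => eH z *: f x`_0 s1)) //; lin_solve.
transitivity (sweedler DH 1 g (fun q => eH q`_0 *: f x`_0 q`_1)).
  symmetry; apply: (sweedler_split hCH (i := 1)) => //; first multilin_solve.
  case=> [|s0 [|s1 [|]]] //= _.
  rewrite (sweedler_lin DH 1 s1 (fun t => eH t`_1 *: f x`_0 t`_0)); last exact/lin_scaler/lin_id.
  by rewrite (sweedler_counitr hCH (f := fun z => f x`_0 z)) //; lin_solve.
by rewrite (sweedler_counitl hCH (f := fun z => f x`_0 z)) //; lin_solve.
Qed.

End Counit.

Section Coassociativity.
Variables (W : lmodType R) (K : C -> H -> C -> H -> C -> H -> W).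
Hypothesis hK : hexalin K.

Let lin_K1 U (g : U -> C) x2 x3 x4 x5 x6 : lin g -> lin (fun x => K (g x) x2 x3 x4 x5 x6).
Proof. by case: hK => hlin _; apply: lin_comp (hlin x2 x3 x4 x5 x6). Qed.
Let lin_K2 U (g : U -> H) x1 x3 x4 x5 x6 : lin g -> lin (fun x => K x1 (g x) x3 x4 x5 x6).
Proof. by case: hK => _ [hlin _]; apply: lin_comp (hlin x1 x3 x4 x5 x6). Qed.
Let lin_K3 U (g : U -> C) x1 x2 x4 x5 x6 : lin g -> lin (fun x => K x1 x2 (g x) x4 x5 x6).
Proof. by case: hK => _ [_ [hlin _]]; apply: lin_comp (hlin x1 x2 x4 x5 x6). Qed.
Let lin_K4 U (g : U -> H) x1 x2 x3 x5 x6 : lin g -> lin (fun x => K x1 x2 x3 (g x) x5 x6).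
Proof. by case: hK => _ [_ [_ [hlin _]]]; apply: lin_comp (hlin x1 x2 x3 x5 x6). Qed.
Let lin_K5 U (g : U -> C) x1 x2 x3 x4 x6 : lin g -> lin (fun x => K x1 x2 x3 x4 (g x) x6).
Proof. by case: hK => _ [_ [_ [_ [hlin _]]]]; apply: lin_comp (hlin x1 x2 x3 x4 x6). Qed.
Let lin_K6 U (g : U -> H) x1 x2 x3 x4 x5 : lin g -> lin (fun x => K x1 x2 x3 x4 x5 (g x)).
Proof. by case: hK => _ [_ [_ [_ [_ hlin]]]]; apply: lin_comp (hlin x1 x2 x3 x4 x5). Qed.

Definition smash_coassoc_nf a g := sweedler DC 2 a (fun x => sweedler DH 6 g (fun s =>
  K x`_0 s`_2 (act (s`_3 * Sinv s`_1) x`_1) s`_4 (act (s`_5 * Sinv s`_0) x`_2) s`_6)).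

Lemma smash_coassoc_left_nf a g :
  sweedler DC 1 a (fun x => sweedler DH 3 g (fun q => sweedler DC 1 x`_0 (fun y =>
    sweedler DH 3 q`_1 (fun r => K y`_0 r`_1 (act (r`_2 * Sinv r`_0) y`_1) r`_3
                                   (act (q`_2 * Sinv q`_0) x`_1) q`_3))))
  = smash_coassoc_nf a g.
Proof.
transitivity (sweedler DC 1 a (fun x => sweedler DC 1 x`_0 (fun y => sweedler DH 3 g (fun q =>
     sweedler DH 3 q`_1 (fun r => K y`_0 r`_1 (act (r`_2 * Sinv r`_0) y`_1) r`_3
                                    (act (q`_2 * Sinv q`_0) x`_1) q`_3))))).
  by apply: eq_sweedler => x _; rewrite exchange_sweedler.
transitivity (sweedler DC 2 a (fun x => sweedler DH 3 g (fun q => sweedler DH 3 q`_1 (fun r =>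
     K x`_0 r`_1 (act (r`_2 * Sinv r`_0) x`_1) r`_3 (act (q`_2 * Sinv q`_0) x`_2) q`_3)))).
  apply: (sweedler_split hCC (i := 0)) => //; first multilin_solve.
  by case=> [|x0 [|x1 [|]]].
apply: eq_sweedler => x _.
transitivity (sweedler DH 4 g (fun s => sweedler DH 2 s`_2 (fun r =>
     K x`_0 r`_0 (act (r`_1 * Sinv s`_1) x`_1) r`_2 (act (s`_3 * Sinv s`_0) x`_2) s`_4))).
  apply: (sweedler_split hCH (i := 1)) => //; first multilin_solve.
  by case=> [|q0 [|q1 [|q2 [|q3 [|]]]]].
transitivity (sweedler DH 5 g (fun s => sweedler DH 1 s`_3 (fun r =>
     K x`_0 s`_2 (act (r`_0 * Sinv s`_1) x`_1) r`_1 (act (s`_4 * Sinv s`_0) x`_2) s`_5))).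
  apply: (sweedler_split hCH (i := 2)) => //; first multilin_solve.
  by case=> [|q0 [|q1 [|q2 [|q3 [|q4 [|]]]]]].
apply: (sweedler_split hCH (i := 3)) => //; first multilin_solve.
by case=> [|q0 [|q1 [|q2 [|q3 [|q4 [|q5 [|]]]]]]].
Qed.

Lemma smash_coassoc_right_expand a g :
  sweedler DC 1 a (fun x => sweedler DH 3 g (fun q =>
    sweedler DC 1 (act (q`_2 * Sinv q`_0) x`_1) (fun y =>
      sweedler DH 3 q`_3 (fun r => K x`_0 q`_1 y`_0 r`_1 (act (r`_2 * Sinv r`_0) y`_1) r`_3))))
  = sweedler DC 2 a (fun x => sweedler DH 3 g (fun q => sweedler DH 1 q`_2 (fun p =>
      sweedler DH 1 q`_0 (fun t => sweedler DH 3 q`_3 (fun r =>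
        K x`_0 q`_1 (act (p`_0 * Sinv t`_1) x`_1) r`_1
          (act (r`_2 * Sinv r`_0) (act (p`_1 * Sinv t`_0) x`_2)) r`_3))))).
Proof.
transitivity (sweedler DC 1 a (fun x => sweedler DC 1 x`_1 (fun z => sweedler DH 3 g (fun q =>
   sweedler DH 1 q`_2 (fun p => sweedler DH 1 q`_0 (fun t => sweedler DH 3 q`_3 (fun r =>
     K x`_0 q`_1 (act (p`_0 * Sinv t`_1) z`_0) r`_1
       (act (r`_2 * Sinv r`_0) (act (p`_1 * Sinv t`_0) z`_1)) r`_3))))))).
  apply: eq_sweedler => x _.
  transitivity (sweedler DH 3 g (fun q => sweedler DH 1 q`_2 (fun p =>
     sweedler DH 1 q`_0 (fun t => sweedler DC 1 x`_1 (fun z => sweedler DH 3 q`_3 (fun r =>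
       K x`_0 q`_1 (act (p`_0 * Sinv t`_1) z`_0) r`_1
         (act (r`_2 * Sinv r`_0) (act (p`_1 * Sinv t`_0) z`_1)) r`_3)))))).
    apply: eq_sweedler => q _.
    rewrite sweedler_act; last multilin_solve.
    rewrite (sweedler_mul hH); last multilin_solve.
    by apply: eq_sweedler => p _; rewrite (sweedler_Sinv hH SK SinvK) //; multilin_solve.
  etransitivity; last exact: exchange_sweedler.
  apply: eq_sweedler => q _; etransitivity; last exact: exchange_sweedler.
  by apply: eq_sweedler => p _; apply: exchange_sweedler.
apply: (sweedler_split hCC (i := 1)) => //; first multilin_solve.
by case=> [|x0 [|x1 [|]]].
Qed.

Lemma smash_coassoc_right_flatten (x : seq C) g :
  sweedler DH 3 g (fun q => sweedler DH 1 q`_2 (fun p => sweedler DH 1 q`_0 (fun t =>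
    sweedler DH 3 q`_3 (fun r => K x`_0 q`_1 (act (p`_0 * Sinv t`_1) x`_1) r`_1
      (act (r`_2 * Sinv r`_0) (act (p`_1 * Sinv t`_0) x`_2)) r`_3))))
  = sweedler DH 8 g (fun s => K x`_0 s`_2 (act (s`_3 * Sinv s`_1) x`_1) s`_6
      (act (s`_7 * Sinv s`_5) (act (s`_4 * Sinv s`_0) x`_2)) s`_8).
Proof.
transitivity (sweedler DH 4 g (fun s => sweedler DH 1 s`_0 (fun t => sweedler DH 3 s`_4 (fun r =>
     K x`_0 s`_1 (act (s`_2 * Sinv t`_1) x`_1) r`_1
       (act (r`_2 * Sinv r`_0) (act (s`_3 * Sinv t`_0) x`_2)) r`_3)))).
  apply: (sweedler_split hCH (i := 2)) => //; first multilin_solve.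
  by case=> [|q0 [|q1 [|q2 [|q3 [|]]]]].
transitivity (sweedler DH 5 g (fun s => sweedler DH 3 s`_5 (fun r =>
     K x`_0 s`_2 (act (s`_3 * Sinv s`_1) x`_1) r`_1
       (act (r`_2 * Sinv r`_0) (act (s`_4 * Sinv s`_0) x`_2)) r`_3))).
  apply: (sweedler_split hCH (i := 0)) => //; first multilin_solve.
  by case=> [|q0 [|q1 [|q2 [|q3 [|q4 [|]]]]]].
transitivity (sweedler DH 6 g (fun s => sweedler DH 2 s`_6 (fun r =>
     K x`_0 s`_2 (act (s`_3 * Sinv s`_1) x`_1) r`_0
       (act (r`_1 * Sinv s`_5) (act (s`_4 * Sinv s`_0) x`_2)) r`_2))).
  apply: (sweedler_split hCH (i := 5)) => //; first multilin_solve.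
  by case=> [|q0 [|q1 [|q2 [|q3 [|q4 [|q5 [|]]]]]]].
transitivity (sweedler DH 7 g (fun s => sweedler DH 1 s`_7 (fun r =>
     K x`_0 s`_2 (act (s`_3 * Sinv s`_1) x`_1) s`_6
       (act (r`_0 * Sinv s`_5) (act (s`_4 * Sinv s`_0) x`_2)) r`_1))).
  apply: (sweedler_split hCH (i := 6)) => //; first multilin_solve.
  by case=> [|q0 [|q1 [|q2 [|q3 [|q4 [|q5 [|q6 [|]]]]]]]].
apply: (sweedler_split hCH (i := 7)) => //; first multilin_solve.
by case=> [|q0 [|q1 [|q2 [|q3 [|q4 [|q5 [|q6 [|q7 [|]]]]]]]]].
Qed.

(* The surplus factors g^(4) and g^(5) of the flattened right-hand side meet
   as S^{-1}(g^(5)) g^(4) = ε(g^(4)) 1. *)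
Lemma smash_coassoc_right_cancel (x : seq C) g :
  sweedler DH 8 g (fun s => K x`_0 s`_2 (act (s`_3 * Sinv s`_1) x`_1) s`_6
    (act (s`_7 * Sinv s`_5) (act (s`_4 * Sinv s`_0) x`_2)) s`_8)
  = sweedler DH 6 g (fun s =>
      K x`_0 s`_2 (act (s`_3 * Sinv s`_1) x`_1) s`_4 (act (s`_5 * Sinv s`_0) x`_2) s`_6).
Proof.
transitivity (sweedler DH 7 g (fun s => eH s`_4 *:
     K x`_0 s`_2 (act (s`_3 * Sinv s`_1) x`_1) s`_5 (act (s`_6 * Sinv s`_0) x`_2) s`_7)).
  symmetry; apply: (sweedler_split hCH (i := 4)) => //; first multilin_solve.
  case=> [|s0 [|s1 [|s2 [|s3 [|s4 [|s5 [|s6 [|s7 [|]]]]]]]]] //= _.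
  have -> : sweedler DH 1 s4 (fun t => K x`_0 s2 (act (s3 * Sinv s1) x`_1) s5
       (act (s6 * Sinv t`_1) (act (t`_0 * Sinv s0) x`_2)) s7)
     = sweedler DH 1 s4 (fun t => K x`_0 s2 (act (s3 * Sinv s1) x`_1) s5
       (act (s6 * (Sinv t`_1 * t`_0) * Sinv s0) x`_2) s7).
    by apply: eq_sweedler => t _; rewrite -actM !mulrA.
  have hl : lin (fun z => K x`_0 s2 (act (s3 * Sinv s1) x`_1) s5 (act (s6 * z * Sinv s0) x`_2) s7).
    by lin_solve.
  rewrite (sweedler_lin DH 1 s4 (fun t => Sinv t`_1 * t`_0) hl) (antipodeVL hH SK SinvK).
  by rewrite (linZ _ _ hl) mulr1.
symmetry; apply: (sweedler_split hCH (i := 4)) => //; first multilin_solve.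
case=> [|s0 [|s1 [|s2 [|s3 [|s4 [|s5 [|s6 [|]]]]]]]] //= _.
by rewrite (sweedler_counitl hCH (f := fun z =>
      K x`_0 s2 (act (s3 * Sinv s1) x`_1) z (act (s5 * Sinv s0) x`_2) s6)) //; lin_solve.
Qed.

Lemma smash_coassoc a g :
  \sum_(p <- smash_Delta DH S Sinv DC act a g)
     \sum_(q <- smash_Delta DH S Sinv DC act p.1.1 p.1.2) K q.1.1 q.1.2 q.2.1 q.2.2 p.2.1 p.2.2 =
  \sum_(p <- smash_Delta DH S Sinv DC act a g)
     \sum_(q <- smash_Delta DH S Sinv DC act p.2.1 p.2.2) K p.1.1 p.1.2 q.1.1 q.1.2 q.2.1 q.2.2.
Proof.
rewrite !smash_DeltaE /=.
under eq_sweedler do under eq_sweedler do rewrite smash_DeltaE.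
under [RHS]eq_sweedler do under eq_sweedler do rewrite smash_DeltaE.
rewrite smash_coassoc_left_nf smash_coassoc_right_expand; apply: eq_sweedler => x _.
by rewrite smash_coassoc_right_flatten smash_coassoc_right_cancel.
Qed.

End Coassociativity.
End SmashCoproduct.

Unset Implicit Arguments.

Theorem mainTheorem2 (R : comPzRingType) (H : algType R)
  (DH : H -> seq (H * H)) (eH : H -> R) (S Sinv : H -> H)
  (C : lmodType R) (DC : C -> seq (C * C)) (eC : C -> R) (act : H -> C -> C) :
  is_Hopf_algebra DH eH S ->
  cancel S Sinv -> cancel Sinv S ->
  is_module_coalgebra DH eH DC eC act ->
  let D := smash_Delta DH S Sinv DC act in
  let eD := fun x : C * H => eC x.1 * eH x.2 in
  [/\ (* well-definedness: D is R-linear in each tensor factor *)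
      forall (r : R) (a a' : C) (g : H),
        eqT4 (map (@flat4 C H) (D (r *: a + a') g))
             (map (@flat4 C H) ([seq (r *: p.1.1, p.1.2, p.2) | p <- D a g] ++ D a' g)),
      forall (r : R) (a : C) (g g' : H),
        eqT4 (map (@flat4 C H) (D a (r *: g + g')))
             (map (@flat4 C H) ([seq (r *: p.1.1, p.1.2, p.2) | p <- D a g] ++ D a g')),
      forall (a : C) (g : H),
        eqT6 (flatten [seq [seq (q.1.1, q.1.2, q.2.1, q.2.2, p.2.1, p.2.2)
                           | q <- D p.1.1 p.1.2] | p <- D a g])
             (flatten [seq [seq (p.1.1, p.1.2, q.1.1, q.1.2, q.2.1, q.2.2)
                           | q <- D p.2.1 p.2.2] | p <- D a g]),
      forall (a : C) (g : H),
        eqT2 [seq (eD p.1 *: p.2.1, p.2.2) | p <- D a g] [:: (a, g)] &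
      forall (a : C) (g : H),
        eqT2 [seq (eD p.2 *: p.1.1, p.1.2) | p <- D a g] [:: (a, g)]].
Proof.
move=> hH SK SinvK hM D eD; split.
- move=> r a a' g W f hf; rewrite !big_map big_cat big_map /= quadlin_sumZ //.
  exact: (smash_sum_linl hH SK SinvK hM hf).
- move=> r a g g' W f hf; rewrite !big_map big_cat big_map /= quadlin_sumZ //.
  exact: (smash_sum_linr hH SK SinvK hM hf).
- move=> a g W K hK; rewrite !big_flatten /= !big_map.
  under eq_bigr do rewrite big_map.
  under [RHS]eq_bigr do rewrite big_map.
  exact: (smash_coassoc hH SK SinvK hM hK).
- by move=> a g W f hf; rewrite big_map big_seq1 (smash_counitl hH SK SinvK hM hf).
- by move=> a g W f hf; rewrite big_map big_seq1 (smash_counitr hH SK SinvK hM hf).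
Qed.
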